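(* Let $\mathbf{h}=(h_1,\dots,h_p)\subset\mathbb{Z}[X_1,\dots,X_n]$ satisfy assumption $\mathsf{G}$, $V=V(\mathbf{h})$, and let $\delta$ be an upper bound on the cardinality of $W(\pi_1,V)$. Consider the linear forms $u^{(i)}=L_1+iL_2+\cdots+i^{p-1}L_p$ for $i\in\{1,\dots,8(p-1)\delta\}$. Then at least $7/8$ of these linear forms have coefficient vector $\mathbf{u}=(1,i,\dots,i^{p-1})$ satisfying $u_1\ell_{\mathbf{x},1}+\cdots+u_p\ell_{\mathbf{x},p}\ne0$ for every $\mathbf{x}\in W(\pi_1,V)$, where $\boldsymbol{\ell}_{\mathbf{x}}=[\ell_{\mathbf{x},1},\dots,\ell_{\mathbf{x},p}]$ is a nonzero vector in the left nullspace of $\mathrm{jac}_{\mathbf{x}}(\mathbf{h},1)$.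
   Context: $\pi_1(x_1,\dots,x_n)=x_1$; $V(\mathbf{h})\subset\mathbb{C}^n$ the zero-set. $\mathrm{jac}(\mathbf{h})$ is the Jacobian matrix; $\mathrm{jac}(\mathbf{h},1)=(\partial h_i/\partial X_j)_{1\le i\le p,\,2\le j\le n}$. $W(\pi_1,V)$ is the set of points $\mathbf{x}\in V$, not in the singular locus of $V$, with $\pi_1(T_{\mathbf{x}}V)=\{0\}$. For a $(p-1)$-minor $m$ of $\mathrm{jac}(\mathbf{h},1)$, $\mathsf{Minors}(\mathbf{h},m)$ is the vector of $p$-minors obtained by adding the missing row and a missing column to $m$, $\mathcal{O}(m)=\{m\ne0\}$. Assumption $\mathsf{G}$: (1) $\mathrm{jac}(\mathbf{h})$ has rank $p$ on $V$; (2) $\mathrm{jac}(\mathbf{h},1)$ has rank $p-1$ on $W(\pi_1,V)$ (so $\boldsymbol{\ell}_{\mathbf{x}}$ is unique up to scalar); (3) $W(\pi_1,V)$ is finite; (4) for each $(p-1)$-minor $m$, $\mathbf{h},\mathsf{Minors}(\mathbf{h},m)$ define $W(\pi_1,V)$ in $\mathcal{O}(m)$ with Jacobian of rank $n$ on $W(\pi_1,V)\cap\mathcal{O}(m)$. *)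

From HB Require Import structures.
From mathcomp Require Import all_boot all_order all_algebra.
From mathcomp Require Import mpoly.
Set Implicit Arguments. Unset Strict Implicit. Unset Printing Implicit Defensive.
Import Order.TTheory GRing.Theory Num.Theory.
Local Open Scope ring_scope.

(* Conventions: the paper's ambient dimension n is [n.+1] here: variables are
   X_0 .. X_n (paper: X_1 .. X_{n+1}); pi_1 is the coordinate 0.
   Points of C^{n+1} are row vectors 'rV[C]_(n.+1). *)

Section Defs.
Variables (C : numClosedFieldType) (n p : nat).
Variable h : 'I_p -> {mpoly int[n.+1]}.

Definition hC (i : 'I_p) : {mpoly C[n.+1]} := map_mpoly (fun z : int => z%:~R) (h i).

Definition evalpt (x : 'rV[C]_(n.+1)) (q : {mpoly C[n.+1]}) : C :=
  q.@[fun k => x ord0 k].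

Definition inV (x : 'rV[C]_(n.+1)) : Prop := forall i, evalpt x (hC i) = 0.

Definition jacP : 'M[{mpoly C[n.+1]}]_(p, n.+1) :=
  \matrix_(i, j) (hC i)^`M(j).
Definition jac (x : 'rV[C]_(n.+1)) : 'M[C]_(p, n.+1) :=
  \matrix_(i, j) evalpt x (jacP i j).

Definition jac1P : 'M[{mpoly C[n.+1]}]_(p, n) :=
  \matrix_(i, j) (hC i)^`M(lift ord0 j).
Definition jac1 (x : 'rV[C]_(n.+1)) : 'M[C]_(p, n) :=
  \matrix_(i, j) evalpt x (jac1P i j).

(* W(pi_1, V): nonsingular points of V (Jacobian criterion: jac(h) has
   rank p there, and then T_x V = ker jac_x(h)) at which pi_1(T_x V) = 0. *)
Definition inW (x : 'rV[C]_(n.+1)) : Prop :=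
  inV x /\ \rank (jac x) = p /\
  (forall v : 'cV[C]_(n.+1), jac x *m v = 0 -> v ord0 ord0 = 0).

End Defs.

(* The minor of M with row set Rs and column set Cs (rows/columns in
   increasing order); 0 if the sets have different cardinalities. *)
Definition setminor (R : comNzRingType) (a b : nat) (M : 'M[R]_(a, b))
    (Rs : {set 'I_a}) (Cs : {set 'I_b}) : R :=
  match #|Cs| =P #|Rs| with
  | ReflectT e => \det (\matrix_(i, j) M (enum_val i) (enum_val (cast_ord (esym e) j)))
  | ReflectF _ => 0
  end.

Section Minors.
Variables (C : numClosedFieldType) (n p : nat).
Variable h : 'I_p -> {mpoly int[n.+1]}.

Definition minorP (Rs : {set 'I_p}) (Cs : {set 'I_n}) : {mpoly C[n.+1]} :=
  setminor (jac1P C h) Rs Cs.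

(* Minors(h, m): the p-minors obtained by adding the missing row and the
   missing column c (c ranges over the columns not in Cs) *)
Definition bigminorP (Cs : {set 'I_n}) (c : 'I_n) : {mpoly C[n.+1]} :=
  setminor (jac1P C h) setT (c |: Cs).

Definition sysjac (Cs : {set 'I_n}) (x : 'rV[C]_(n.+1))
    : 'M[C]_(p + #|~: Cs|, n.+1) :=
  col_mx (jac h x)
    (\matrix_(k, j) evalpt x ((bigminorP Cs (enum_val k))^`M(j))).

End Minors.

Definition assumptionG (C : numClosedFieldType) (n p : nat)
    (h : 'I_p -> {mpoly int[n.+1]}) : Prop :=
  (forall x : 'rV[C]_(n.+1), inV h x -> \rank (jac h x) = p) /\
  (forall x : 'rV[C]_(n.+1), inW h x -> \rank (jac1 h x) = p.-1) /\
  (exists s : seq 'rV[C]_(n.+1), forall x, inW h x -> x \in s) /\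
  (forall (Rs : {set 'I_p}) (Cs : {set 'I_n}),
       #|Rs| = p.-1 -> #|Cs| = p.-1 ->
       (forall x : 'rV[C]_(n.+1), evalpt x (minorP C h Rs Cs) != 0 ->
          (inW h x <->
           (inV h x /\ forall c, c \notin Cs -> evalpt x (bigminorP C h Cs c) = 0))) /\
       (forall x : 'rV[C]_(n.+1), inW h x -> evalpt x (minorP C h Rs Cs) != 0 ->
          \rank (sysjac h Cs x) = n.+1)).

From HB Require Import structures.
From mathcomp Require Import all_boot all_order all_algebra.
From mathcomp Require Import mpoly.
From mathcomp Require Import zify ring.
From Stdlib Require Import ClassicalEpsilon.
Import Order.TTheory GRing.Theory Num.Theory.
Local Open Scope ring_scope.

(* At a point x of W(pi_1, V), jac_x(h, 1) has corank one, so its left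
   nullspace is the line spanned by l_x. Hence i is bad for x iff i%:R is a
   root of the nonzero polynomial sum_j l_(x,j) X^j, of degree < p: each x
   rules out at most p - 1 indices. With at most delta points x, at most
   (p - 1) delta of the 8 (p - 1) delta indices are bad. *)

Definition asbool (P : Prop) : bool :=
  if excluded_middle_informative P then true else false.

Lemma asboolP (P : Prop) : reflect P (asbool P).
Proof. by rewrite /asbool; case: excluded_middle_informative; constructor. Qed.

Lemma size_uniq_cover {T : eqType} (bad : T -> pred nat) (k : nat)
    (W : seq T) (r : seq nat) :
  (forall x, x \in W -> forall r', uniq r' -> all (bad x) r' -> size r' <= k)%N ->
  uniq r -> (forall i, i \in r -> has (bad^~ i) W) ->
  (size r <= k * size W)%N.
Proof.
elim: W r => [|x W IH] r bad_le r_uniq r_cover.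
  by case: r r_uniq r_cover => // i r _ /(_ i (mem_head _ _)).
rewrite mulnS -(count_predC (bad x) r) -!size_filter.
apply: leq_add.
  apply: bad_le; [exact: mem_head | exact: filter_uniq | exact: filter_all].
apply: IH; first by move=> y yW; apply: bad_le; rewrite inE yW orbT.
  exact: filter_uniq.
by move=> i; rewrite mem_filter /= => /andP[/negbTE bad_xi /r_cover]; rewrite /= bad_xi.
Qed.

Lemma left_null_corank1_sub {F : fieldType} {p m : nat} {A : 'M[F]_(p, m)}
    {l1 l : 'rV[F]_p} :
  \rank A = p.-1 -> l1 != 0 -> l1 *m A = 0 -> l *m A = 0 -> (l <= l1)%MS.
Proof.
move=> rankA l1_neq0 l1A lA.
have l1_ker : (l1 <= kermx A)%MS by rewrite sub_kermx l1A.
have ker_l1 : (kermx A <= l1)%MS.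
  have [_ <-] := mxrank_leqif_sup l1_ker; apply/eqP/anti_leq.
  rewrite mxrank_leqif_sup // mxrank_ker rankA.
  by rewrite rank_rV l1_neq0; lia.
by apply: submx_trans ker_l1; rewrite sub_kermx lA.
Qed.

Lemma size_nat_roots_row_sum {R : numDomainType} {p : nat} {l : 'rV[R]_p}
    {r : seq nat} :
  l != 0 -> uniq r ->
  (forall i, i \in r -> \sum_(j < p) i%:R ^+ j * l ord0 j = 0) ->
  (size r <= p.-1)%N.
Proof.
case: p l => [|p] l l_neq0 r_uniq r_roots.
  by move: l_neq0; rewrite (thinmx0 l) eqxx.
pose q := \poly_(j < p.+1) l ord0 (inord j).
have q_neq0 : q != 0.
  apply: contra l_neq0 => /eqP q0; apply/eqP/rowP => j.
  have := congr1 (fun q : {poly R} => q`_j) q0.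
  by rewrite coef_poly ltn_ord coef0 inord_val mxE.
have q_roots : all (root q) [seq i%:R | i <- r].
  apply/allP => _ /mapP[i ir ->]; apply/rootP.
  rewrite horner_poly -[RHS](r_roots i ir).
  by apply: eq_bigr => j _; rewrite inord_val mulrC.
have uniq_r : uniq [seq i%:R : R | i <- r].
  by rewrite map_inj_uniq // => a b /eqP; rewrite eqr_nat => /eqP.
have := max_poly_roots q_neq0 q_roots uniq_r.
by rewrite size_map => lt_r_q; rewrite -ltnS (leq_trans lt_r_q) // size_poly.
Qed.

Lemma size_corank1_left_null_roots {F : numFieldType} {p m : nat} {A : 'M[F]_(p, m)}
    {r : seq nat} :
  \rank A = p.-1 -> uniq r ->
  (forall i, i \in r -> exists2 l : 'rV[F]_p, l != 0 &
      l *m A = 0 /\ \sum_(j < p) i%:R ^+ j * l ord0 j = 0) ->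
  (size r <= p.-1)%N.
Proof.
case: r => [//|i0 r] rankA r_uniq r_bad.
have [l1 l1_neq0 [l1A _]] := r_bad i0 (mem_head _ _).
apply: (size_nat_roots_row_sum l1_neq0 r_uniq) => i /r_bad[l l_neq0 [lA l_root]].
have /submxP[c l_def] := left_null_corank1_sub rankA l1_neq0 l1A lA.
have l_scale j : l ord0 j = c ord0 ord0 * l1 ord0 j by rewrite l_def mxE big_ord1.
have c_neq0 : c ord0 ord0 != 0.
  by apply: contraNneq l_neq0 => c0; apply/eqP/rowP => j; rewrite l_scale c0 mul0r mxE.
apply: (mulfI c_neq0); rewrite mulr0 -[RHS]l_root mulr_sumr.
by apply: eq_bigr => j _; rewrite l_scale; ring.
Qed.

Theorem proposition5p4 (C : numClosedFieldType) (n p : nat)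
    (h : 'I_p -> {mpoly int[n.+1]}) (delta : nat) :
  assumptionG C h ->
  (forall s : seq 'rV[C]_(n.+1), uniq s -> (forall x, x \in s -> inW h x) ->
     (size s <= delta)%N) ->
  exists good : seq nat,
    [/\ uniq good,
        (forall i, i \in good -> (1 <= i <= 8 * p.-1 * delta)%N),
        (forall i, i \in good ->
           forall x : 'rV[C]_(n.+1), inW h x ->
           forall l : 'rV[C]_p, l != 0 -> l *m jac1 h x = 0 ->
             \sum_(j < p) (i%:R ^+ j) * l ord0 j != 0)
      & (7 * (8 * p.-1 * delta) <= 8 * size good)%N].
Proof.
move=> [_ [rank_jac1 [[s s_W] _]]] card_W.
set N := (8 * p.-1 * delta)%N.
pose bad x i := exists2 l : 'rV[C]_p, l != 0 &
  l *m jac1 h x = 0 /\ \sum_(j < p) i%:R ^+ j * l ord0 j = 0.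
pose W := undup [seq x <- s | asbool (inW h x)].
have W_inW x : x \in W -> inW h x by rewrite mem_undup mem_filter => /andP[/asboolP].
pose is_good i := ~~ has (fun x => asbool (bad x i)) W.
exists (filter is_good (iota 1 N)); split.
- exact/filter_uniq/iota_uniq.
- by move=> i; rewrite mem_filter mem_iota => /andP[_]; lia.
- move=> i; rewrite mem_filter => /andP[/hasPn i_good _] x x_W l l_neq0 lA.
  apply: contraNneq (i_good x _) => [l_root|]; first by apply/asboolP; exists l.
  by rewrite mem_undup mem_filter s_W //; apply/andP; split=> //; apply/asboolP.
have size_W : (size W <= delta)%N by apply: card_W => //; apply: undup_uniq.
have size_bad : (size (filter (predC is_good) (iota 1 N)) <= p.-1 * delta)%N.
  apply: leq_trans (leq_mul (leqnn p.-1) size_W).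
  apply: (size_uniq_cover (fun x i => asbool (bad x i))); last 2 first.
  - exact/filter_uniq/iota_uniq.
  - by move=> i; rewrite mem_filter /= negbK => /andP[].
  move=> x /W_inW x_W r r_uniq /allP r_bad.
  by apply: size_corank1_left_null_roots (rank_jac1 x x_W) r_uniq _ => i /r_bad /asboolP.
have seven_eighths (a b m : nat) : (a + b = 8 * m -> b <= m -> 7 * (8 * m) <= 8 * a)%N.
  by move=> ab bm; lia.
have := count_predC is_good (iota 1 N); rewrite -!size_filter size_iota.
rewrite /N -mulnA in size_bad * => /seven_eighths; exact.
Qed.
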